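(* Let $G=(V,E)$ and $H=(U,F)$ be finite simple graphs, each with $n$ vertices, and suppose the uniqueness trees $T(v)$, $v\in V\cup U$, have been constructed as in the context. Then the tree comparison stage of the uniqueness tree algorithm (described in the context) runs in time $O(n^7)$ in the worst case.
   Context: A simple graph is a finite, unweighted, undirected graph with no loops or multiple edges; the size $n$ of a graph is its number of vertices. Uniqueness trees: for each vertex $v$ of a graph, $T(v)$ is the rooted tree with node labels in the vertex set built level by level: level $0$ is the root labelled $v$; a node on the current level is unique if its label occurs exactly once among the labels on that level; non-unique nodes are leaves; each unique node labelled $u$ receives one child labelled $w$ for each neighbour $w$ of $u$; this continues while some node on the current level is unique and the height of $T(v)$ is less than $n$. Tree comparison stage: initially no vertex is mapped. For each unmapped $v\in V$ and, in turn, each unmapped $u\in U$, declare $v$ and $u$ equivalent unless one of the following holds: the heights of $T(v)$ and $T(u)$ differ; for some level, the numbers of nodes on that level of $T(v)$ and $T(u)$ differ; for some level and some $i\in\{1,\dots,n-1\}$, the number of nodes on that level having exactly $i$ children differs between $T(v)$ and $T(u)$. If $v$ and $u$ are equivalent, mark both as mapped. At the end, output ''$G\cong H$'' if all vertices of $V$ and $U$ have been mapped, and ''$G\not\cong H$'' otherwise. *)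

From mathcomp Require Import all_boot.
Set Implicit Arguments. Unset Strict Implicit. Unset Printing Implicit Defensive.

Section UTree.
Variables (T : finType) (e : rel T).

Definition nbrs (x : T) : seq T := [seq y <- enum T | e x y].

(* a node labelled x on level L is unique iff x occurs exactly once in L *)
Definition uniq_on (L : seq T) (x : T) : bool := count_mem x L == 1.

(* labels of the next level: each unique node u gets one child per neighbour *)
Definition next_level (L : seq T) : seq T :=
  flatten [seq (if uniq_on L x then nbrs x else [::]) | x <- L].

Definition nchildren (L : seq T) (x : T) : nat :=
  if uniq_on L x then size (nbrs x) else 0.

(* The tree, represented level by level; each level is the list of its nodes,
   each node given by its number of children.  [fuel] is the number of
   further levels that may still be added (the height must stay <= n). *)
Fixpoint build (fuel : nat) (L : seq T) : seq (seq nat) :=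
  match fuel with
  | 0 => [:: [seq 0 | _ <- L]]
  | k.+1 =>
      let L' := next_level L in
      if has (uniq_on L) L && (L' != [::])
      then [seq nchildren L x | x <- L] :: build k L'
      else [:: [seq 0 | _ <- L]]
  end.

(* T(v): level 0 is the root v; construction continues while some node of
   the current level is unique and the height is less than n = #|T|. *)
Definition utree (v : T) : seq (seq nat) := build #|T| [:: v].

End UTree.

Definition tequiv (n : nat) (t1 t2 : seq (seq nat)) : bool :=
  (size t1 == size t2) &&
  all2 (fun l1 l2 => (size l1 == size l2) &&
          all (fun i => count_mem i l1 == count_mem i l2) (iota 1 n.-1)) t1 t2.

(* traversing a level and counting, for each node, its children *)
Definition scan_cost (l : seq nat) : nat := \sum_(k <- l) k.+1.
(* computing the size of a level, and, for each i in 1..n-1, the number of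
   nodes of the level having exactly i children *)
Definition level_cost (n : nat) (l : seq nat) : nat :=
  (size l).+1 + n.-1 * scan_cost l.
(* one comparison of T(v) with T(u): heights, then all levels of both trees *)
Definition cmp_cost (n : nat) (t1 t2 : seq (seq nat)) : nat :=
  (size t1).+1 + (size t2).+1 +
  \sum_(l <- t1) level_cost n l + \sum_(l <- t2) level_cost n l.

(* The state is (mapped vertices of U, cost).
   For each v of V in turn, and for each u of U in turn, one step is spent;
   if v is still unmapped and u is unmapped, T(v) and T(u) are compared
   (cost cmp_cost) and, if equivalent, both become mapped.  Finally checking
   that all vertices are mapped costs #|V| + #|U|. *)
Section Compare.
Variables (V U : finType) (eG : rel V) (eH : rel U).

Definition inner_step (n : nat) (v : V) (st : bool * seq U * nat) (u : U)
    : bool * seq U * nat :=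
  let: (vm, mU, c) := st in
  let c1 := c.+1 in
  if ~~ vm && (u \notin mU) then
    let c2 := c1 + cmp_cost n (utree eG v) (utree eH u) in
    if tequiv n (utree eG v) (utree eH u) then (true, u :: mU, c2)
    else (false, mU, c2)
  else (vm, mU, c1).

Definition outer_step (n : nat) (st : seq U * nat) (v : V) : seq U * nat :=
  let: (mU, c) := st in
  let: (_, mU', c') := foldl (inner_step n v) (false, mU, c) (enum U) in
  (mU', c').

Definition comparison_stage_cost : nat :=
  let n := #|V| in
  (foldl (outer_step n) ([::], 0) (enum V)).2 + #|V| + #|U|.

End Compare.

From mathcomp Require Import all_boot zify.
Set Implicit Arguments. Unset Strict Implicit.

(* Every level of T(v) has at most n^2 nodes: a level is the concatenation of
   the neighbourhoods of the unique nodes of the previous one, whose labels are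
   pairwise distinct, so at most n of them contribute at most n children each.
   Scanning the at most n + 1 levels once for each i in {1, .., n-1} therefore
   costs O(n^5) per comparison, and the stage makes at most n^2 comparisons.
   Nothing here uses that the graphs are simple. *)

Lemma foldl_cost_le (A B : Type) (f : A -> B -> A) (cost : A -> nat) (C : nat) :
  (forall a b, cost (f a b) <= cost a + C) ->
  forall s a, cost (foldl f a s) <= cost a + size s * C.
Proof.
move=> fC; elim=> [|b s IHs] a /=; first by rewrite addn0.
by rewrite (leq_trans (IHs _)) // mulSn addnA leq_add2r fC.
Qed.

Lemma sum_seq_le_const (I : eqType) (r : seq I) (F : I -> nat) (K : nat) :
  (forall i, i \in r -> F i <= K) -> \sum_(i <- r) F i <= size r * K.
Proof.
move=> FK; rewrite (@leq_trans (\sum_(i <- r) K)) //.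
  by rewrite big_seq [leqRHS]big_seq leq_sum.
by rewrite big_const_seq count_predT iter_addn_0 mulnC.
Qed.

Section UniquenessTreeBounds.
Variables (T : finType) (e : rel T).

Lemma size_nbrs x : size (nbrs e x) <= #|T|.
Proof. by rewrite size_filter cardE count_size. Qed.

Lemma uniq_filter_uniq_on (L : seq T) : uniq (filter (uniq_on L) L).
Proof.
apply: count_mem_uniq => x; rewrite count_filter mem_filter.
have [Lx|nLx] := boolP (uniq_on L x).
  rewrite (@eq_count _ _ (pred1 x)) => [|y /=]; last by case: eqP => // ->.
  by move: (Lx) => /eqP ->; rewrite -has_pred1 has_count (eqP Lx).
rewrite (@eq_count _ _ pred0) ?count_pred0 // => y /=.
by case: eqP => // ->; apply: negbTE.
Qed.

Lemma count_uniq_on_le (L : seq T) : count (uniq_on L) L <= #|T|.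
Proof.
by rewrite -size_filter -(card_uniqP (uniq_filter_uniq_on L)) max_card.
Qed.

Lemma size_next_level (L : seq T) : size (next_level e L) <= #|T| * #|T|.
Proof.
rewrite size_flatten /shape -map_comp.
suff sum_le s : sumn [seq size (if uniq_on L x then nbrs e x else [::])
                     | x <- s] <= count (uniq_on L) s * #|T|.
  by rewrite (leq_trans (sum_le L)) // leq_mul2r count_uniq_on_le orbT.
elim: s => [|x s IHs] //=; case: (uniq_on L x) => //=.
by rewrite mulSn leq_add // size_nbrs.
Qed.

Lemma nchildren_le (L : seq T) x : nchildren e L x <= #|T|.
Proof. by rewrite /nchildren; case: ifP => // _; apply: size_nbrs. Qed.

Definition bounded_level (m : nat) (l : seq nat) : bool :=
  (size l <= m * m) && all (leq^~ m) l.

Lemma size_build fuel (L : seq T) : size (build e fuel L) <= fuel.+1.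
Proof. by elim: fuel L => [|k IHk] L //=; case: ifP => //= _; rewrite ltnS. Qed.

Lemma build_bounded fuel (L : seq T) :
  size L <= #|T| * #|T| -> all (bounded_level #|T|) (build e fuel L).
Proof.
have zeros_bounded (L0 : seq T) : all (leq^~ #|T|) [seq 0 | _ <- L0].
  by apply/allP => _ /mapP [? _ ->].
elim: fuel L => [|k IHk] L sizeL /=.
  by rewrite /bounded_level size_map sizeL zeros_bounded.
case: ifP => _ /=.
  rewrite IHk ?size_next_level // andbT /bounded_level size_map sizeL.
  by apply/allP => _ /mapP [x _ ->]; apply: nchildren_le.
by rewrite andbT /bounded_level size_map sizeL zeros_bounded.
Qed.

Lemma size_utree v : size (utree e v) <= #|T|.+1.
Proof. exact: size_build. Qed.

Lemma utree_bounded v : all (bounded_level #|T|) (utree e v).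
Proof.
apply: build_bounded; have: 0 < #|T| by apply/card_gt0P; exists v.
by case: #|T|.
Qed.

End UniquenessTreeBounds.

Lemma scan_cost_le m (l : seq nat) :
  all (leq^~ m) l -> scan_cost l <= size l * m.+1.
Proof.
move=> /allP lm; rewrite /scan_cost sum_seq_le_const // => k /lm.
Qed.

Lemma level_cost_le m (l : seq nat) :
  bounded_level m l -> level_cost m l <= 2 * m.+1 ^ 4.
Proof.
case/andP=> sizel /scan_cost_le scan_le; rewrite /level_cost mul2n -addnn.
apply: leq_add.
  by move: sizel; rewrite !expnS expn0 muln1; nia.
rewrite (@leq_trans (m * (m * m * m.+1))) //.
  by rewrite leq_mul ?leq_pred // (leq_trans scan_le) ?leq_mul2r ?sizel ?orbT.
by rewrite !expnS expn0 muln1; nia.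
Qed.

Lemma utree_cost_le (T : finType) (e : rel T) v :
  \sum_(l <- utree e v) level_cost #|T| l <= 2 * #|T|.+1 ^ 5.
Proof.
rewrite (leq_trans (sum_seq_le_const (K := 2 * #|T|.+1 ^ 4) _)) //.
  by move=> l /(allP (utree_bounded e v)) /level_cost_le.
by rewrite mulnCA expnS leq_mul2l leq_mul2r size_utree !orbT.
Qed.

Lemma cmp_cost_le (V U : finType) (eG : rel V) (eH : rel U) v u :
  #|V| = #|U| -> cmp_cost #|V| (utree eG v) (utree eH u) <= 8 * #|V|.+1 ^ 5.
Proof.
move=> VU; rewrite /cmp_cost.
have sizeG := size_utree eG v; have sizeH := size_utree eH u.
have costG := utree_cost_le eG v; have costH := utree_cost_le eH u.
rewrite -VU in sizeH costH.
have : #|V|.+1 <= #|V|.+1 ^ 5 by rewrite -{1}(expn1 #|V|.+1) leq_pexp2l.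
lia.
Qed.

Lemma comparison_stage_cost_le (V U : finType) (eG : rel V) (eH : rel U) C :
  (forall v u, cmp_cost #|V| (utree eG v) (utree eH u) <= C) ->
  comparison_stage_cost eG eH <= #|V| * (#|U| * C.+1) + #|V| + #|U|.
Proof.
move=> cmpC; rewrite /comparison_stage_cost !leq_add2r.
have inner_le v : forall s st, (foldl (inner_step eG eH #|V| v) st s).2
                               <= st.2 + size s * C.+1.
  apply: foldl_cost_le => -[[vm mU] c] u /=; rewrite /inner_step.
  have := cmpC v u; case: ifP => _; last by move=> _ /=; lia.
  by case: ifP => _ /=; lia.
have outer_le : forall s st, (foldl (outer_step eG eH #|V|) st s).2
                            <= st.2 + size s * (#|U| * C.+1).
  apply: foldl_cost_le => -[mU c] v /=; rewrite /outer_step.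
  have := inner_le v (enum U) (false, mU, c).
  by case: foldl => -[? ?] ? /=; rewrite -cardE.
by rewrite (leq_trans (outer_le _ _)) //= -cardE.
Qed.

Lemma comparison_bound_le n : n * (n * (8 * n.+1 ^ 5).+1) + n + n <= 352 * n ^ 7.
Proof.
have n_le : n <= n ^ 2 * n.+1 ^ 5.
  case: n => [|n] //; rewrite -[n.+1 in leqLHS]muln1 expnS expn1 -mulnA.
  by rewrite leq_mul // muln_gt0 expn_gt0.
have succ_le : n ^ 2 * n.+1 ^ 5 <= 32 * n ^ 7.
  case: n {n_le} => [|n] //; rewrite (@leq_trans (n.+1 ^ 2 * (2 * n.+1) ^ 5)) //.
    by rewrite leq_mul2l leq_exp2r //; lia.
  by rewrite expnMn mulnCA -expnD.
move: n_le succ_le; rewrite expnS expn1; lia.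
Qed.

Theorem lemma2 :
  exists c : nat,
    forall (V U : finType) (eG : rel V) (eH : rel U),
      symmetric eG -> irreflexive eG ->
      symmetric eH -> irreflexive eH ->
      forall n : nat, #|V| = n -> #|U| = n ->
      comparison_stage_cost eG eH <= c * n ^ 7 + c.
Proof.
exists 352 => V U eG eH _ _ _ _ n Vn Un.
have cmp_le v u := cmp_cost_le eG eH v u (etrans Vn (esym Un)).
rewrite (leq_trans (comparison_stage_cost_le cmp_le)) // Vn Un.
by rewrite (leq_trans (comparison_bound_le n)) ?leq_addr.
Qed.
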